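(* Let $q=2$. Under $G_2$ there are exactly $6$ line orbits, namely: $\mathcal L_1=\{\text{RC-lines}\}$ (size $3$); $\mathcal L_2=\{\text{IA-lines}\}$ (size $1$); $\mathcal L_3=\{\text{U}\Gamma_2\text{-lines}\}$ (size $3$); $\mathcal L_4=\{\text{RA-lines}\}\cup\{\text{IC-lines}\}$ (size $3+1=4$); $\mathcal L_5=\{\text{Tr-lines}\}\cup\{\text{U}\Gamma_1\text{-lines}\}\cup\{\text{Un}\Gamma\text{-lines}\}$ (size $3+3+6=12$); $\mathcal L_6=\{\text{E}\Gamma\text{-lines}\}\cup\{\text{En}\Gamma\text{-lines}\}$ (size $6+6=12$).
   Context: Notation. $\mathbb F_q$ is the field with $q$ elements, $\mathbb F_q^+=\mathbb F_q\cup\{\infty\}$. Points of $\mathrm{PG}(3,q)$ are written $\mathbf P(x_0,x_1,x_2,x_3)$ with $x$ a nonzero row vector up to scalars; $\boldsymbol\pi(c_0,c_1,c_2,c_3)$ is the plane $c_0x_0+c_1x_1+c_2x_2+c_3x_3=0$. Put $P(t)=\mathbf P(t^3,t^2,t,1)$ for $t\in\mathbb F_q$, $P(\infty)=\mathbf P(1,0,0,0)$, and $\mathscr C=\{P(t):t\in\mathbb F_q^+\}$ (the twisted cubic). The osculating planes are $\pi_{\rm osc}(t)=\boldsymbol\pi(1,-3t,3t^2,-t^3)$ ($t\in\mathbb F_q$) and $\pi_{\rm osc}(\infty)=\boldsymbol\pi(0,0,0,1)$; these $q+1$ planes are called $\Gamma$-planes. The tangent at $P(t)$, $t\in\mathbb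 F_q$, is the line through $P(t)$ and $\mathbf P(3t^2,2t,1,0)$; the tangent at $P(\infty)$ is the line through $\mathbf P(1,0,0,0)$ and $\mathbf P(0,1,0,0)$. A real chord is a line through two distinct points of $\mathscr C$; a real axis is the intersection of two distinct $\Gamma$-planes. For $\alpha\in\mathbb F_{q^2}\setminus\mathbb F_q$, the line of $\mathrm{PG}(3,q^2)$ through $P(\alpha),P(\alpha^q)$ (resp. the intersection of the planes $\pi_{\rm osc}(\alpha),\pi_{\rm osc}(\alpha^q)$, given by the same formulas over $\mathbb F_{q^2}$) is defined over $\mathbb F_q$, and the corresponding line of $\mathrm{PG}(3,q)$ is an imaginary chord (resp. imaginary axis). A unisecant is a line meeting $\mathscr C$ in exactly one point; an external line is a line disjoint from $\mathscr C$. $G_q$ is the group of all projectivities of $\mathrm{PG}(3,q)$ mapping $\mathscr C$ onto itself. Line types (for $q\not\equiv0\pmod 3$): RC = real chord; Tr = tangent; IC = imaginary chord; RA = real axis; IA = imaginary axis; U$\Gamma$ = unisecant which is not a tangent and is contained in some $\Gamma$-plane; Un$\Gamma$ = unisecant contained in no $\Gamma$-plane; E$\Gamma$ = external line contained in exactly one $\Gamma$-plane; En$\Gamma$ = external line contained in no $\Gamma$-plane that is neither an imaginary chord nor an imaginary axis. For $q=2$: $\mathscr C$ lies in the plane $x_1=x_2$; U$\Gamma_2$-lines are the U$\Gamma$-lines contained in the plane $x_1=x_2$, and U$\Gamma_1$-lines are the remaining U$\Gamma$-lines. *)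

(* Projective space PG(3,F) over a finite field F:
   a subspace of F^4 (row vectors) is represented by its canonical
   matrix <<A>>%MS : 'M[F]_4 ; points = rank 1, lines = rank 2. *)
From HB Require Import structures.
From mathcomp Require Import all_boot all_order all_algebra finfield.
Set Implicit Arguments. Unset Strict Implicit. Unset Printing Implicit Defensive.
Import Order.TTheory GRing.Theory Num.Theory.
Local Open Scope ring_scope.

Definition vec4 (R : nzRingType) (a b c d : R) : 'rV[R]_4 :=
  \row_(i < 4) [:: a; b; c; d]`_i.

(* P(t) = P(t^3,t^2,t,1), P(oo) = P(1,0,0,0); None encodes oo *)
Definition Pc (R : nzRingType) (t : option R) : 'rV[R]_4 :=
  match t with Some t => vec4 (t ^+ 3) (t ^+ 2) t 1 | None => vec4 1 0 0 0 end.

(* coefficient vector of the osculating plane pi_osc(t) *)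
Definition osc (R : nzRingType) (t : option R) : 'rV[R]_4 :=
  match t with
  | Some t => vec4 1 (- (3%:R * t)) (3%:R * t ^+ 2) (- t ^+ 3)
  | None => vec4 0 0 0 1 end.

(* second point spanning the tangent at P(t) *)
Definition Tdir (R : nzRingType) (t : option R) : 'rV[R]_4 :=
  match t with
  | Some t => vec4 (3%:R * t ^+ 2) (2%:R * t) 1 0
  | None => vec4 0 1 0 0 end.

Section PG3.
Variable F : finFieldType.

Definition lines : {set 'M[F]_4} :=
  [set L : 'M[F]_4 | (<<L>>%MS == L) && (\rank L == 2)%N].

Definition cubic : {set 'M[F]_4} := [set <<Pc t>>%MS | t : option F].

Definition in_plane (L : 'M[F]_4) (c : 'rV[F]_4) : bool := L *m c^T == 0.

Definition ncub (L : 'M[F]_4) : nat := #|[set P in cubic | (P <= L)%MS]|.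

Definition nGamma (L : 'M[F]_4) : nat :=
  #|[set <<osc t>>%MS | t : option F & in_plane L (osc t)]|.

Definition is_RC (L : 'M[F]_4) : bool :=
  (L \in lines) && [exists t : option F, exists s : option F,
     (<<Pc t>>%MS != <<Pc s>>%MS) && (L == col_mx (Pc t) (Pc s))%MS].

Definition is_Tr (L : 'M[F]_4) : bool :=
  (L \in lines) && [exists t : option F, (L == col_mx (Pc t) (Tdir t))%MS].

Definition is_RA (L : 'M[F]_4) : bool :=
  (L \in lines) && [exists t : option F, exists s : option F,
     (<<osc t>>%MS != <<osc s>>%MS) &&
     (L == kermx (row_mx (osc t)^T (osc s)^T))%MS].

(* imaginary chords / axes, with respect to a quadratic extension K of F
   given by the embedding f : F -> K; q = #|F|, alpha^q the conjugate *)
Definition is_IC (K : finFieldType) (f : {rmorphism F -> K}) (L : 'M[F]_4) :=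
  (L \in lines) && [exists a : K, (a \notin codom f) &&
     (map_mx f L == col_mx (Pc (Some a)) (Pc (Some (a ^+ #|F|))))%MS].

Definition is_IA (K : finFieldType) (f : {rmorphism F -> K}) (L : 'M[F]_4) :=
  (L \in lines) && [exists a : K, (a \notin codom f) &&
     (map_mx f L == kermx (row_mx (osc (Some a))^T
                                  (osc (Some (a ^+ #|F|)))^T))%MS].

Definition is_UG (L : 'M[F]_4) : bool :=
  [&& L \in lines, ncub L == 1%N, ~~ is_Tr L & nGamma L != 0%N].

Definition is_UnG (L : 'M[F]_4) : bool :=
  [&& L \in lines, ncub L == 1%N & nGamma L == 0%N].

Definition is_EG (L : 'M[F]_4) : bool :=
  [&& L \in lines, ncub L == 0%N & nGamma L == 1%N].

Definition is_EnG (K : finFieldType) (f : {rmorphism F -> K}) (L : 'M[F]_4) :=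
  [&& L \in lines, ncub L == 0%N, nGamma L == 0%N, ~~ is_IC f L & ~~ is_IA f L].

(* for q = 2 : the plane x1 = x2 containing the cubic *)
Definition is_UG2 (L : 'M[F]_4) : bool := is_UG L && in_plane L (vec4 0 1 (-1) 0).
Definition is_UG1 (L : 'M[F]_4) : bool := is_UG L && ~~ in_plane L (vec4 0 1 (-1) 0).

Definition Gq : {set 'M[F]_4} :=
  [set A : 'M[F]_4 | (A \in unitmx) && ([set <<X *m A>>%MS | X in cubic] == cubic)].

Definition line_orbit (L : 'M[F]_4) : {set 'M[F]_4} := [set <<L *m A>>%MS | A in Gq].

Definition line_orbits : {set {set 'M[F]_4}} := [set line_orbit L | L in lines].

End PG3.

From HB Require Import structures.
From mathcomp Require Import all_boot all_order all_algebra finfield ring.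
Set Implicit Arguments. Unset Strict Implicit. Unset Printing Implicit Defensive.
Import GRing.Theory.
Local Open Scope ring_scope.

(* Over F_2 the statement is a finite check: PG(3,2) has 35 lines and G_2 is a finite
   set of matrices.  Row vectors are modelled as 4-tuples over an explicit table of a
   finite field, faithfully encoded into the matrix field, so that subspace inclusion,
   spans, kernels and invertibility become membership tests over the finitely many
   tuples.  Each line is [<<col_mx u v>>] for one of 35 representative pairs (u, v), and
   each class predicate becomes a boolean test on these pairs (imaginary chords and axes
   are tested over the table of F_4 = F_2(w)).  Evaluating the tests shows that the six
   unions of classes cover the 35 lines, are closed under G_2 and are single orbits. *)

(** * Vectors over a field table *)

Record field_table := FieldTable {
  ft_sort : eqType;
  ft_enum : seq ft_sort;
  ft_add : ft_sort -> ft_sort -> ft_sort;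
  ft_mul : ft_sort -> ft_sort -> ft_sort;
  ft_zero : ft_sort;
  ft_one : ft_sort }.

Section TableVectors.
Variable T : field_table.
Local Notation E := (ft_sort T).

Definition tvec := (E * E * E * E)%type.
Definition tpair := (tvec * tvec)%type.
Definition tmx := (tvec * tvec * tvec * tvec)%type.

Definition tv0 : tvec := (ft_zero T, ft_zero T, ft_zero T, ft_zero T).

Definition tv_add (u v : tvec) : tvec :=
  let '(a, b, c, d) := u in let '(a', b', c', d') := v in
  (ft_add a a', ft_add b b', ft_add c c', ft_add d d').

Definition tv_scale (k : E) (u : tvec) : tvec :=
  let '(a, b, c, d) := u in (ft_mul k a, ft_mul k b, ft_mul k c, ft_mul k d).

Definition tv_dot (u v : tvec) : E :=
  let '(a, b, c, d) := u in let '(a', b', c', d') := v in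
  ft_add (ft_add (ft_mul a a') (ft_mul b b')) (ft_add (ft_mul c c') (ft_mul d d')).

Definition tv_mulmx (z : tvec) (r : tmx) : tvec :=
  let '(a, b, c, d) := z in let '(r0, r1, r2, r3) := r in
  tv_add (tv_add (tv_scale a r0) (tv_scale b r1)) (tv_add (tv_scale c r2) (tv_scale d r3)).

Definition tpair_mulmx (p : tpair) (r : tmx) : tpair :=
  (tv_mulmx p.1 r, tv_mulmx p.2 r).

Definition tv_enum : seq tvec :=
  [seq (x, d) | x <- [seq (y, c) | y <- [seq (a, b) | a <- ft_enum T, b <- ft_enum T],
                                   c <- ft_enum T], d <- ft_enum T].

Definition tv_span1 (u : tvec) : seq tvec := [seq tv_scale k u | k <- ft_enum T].

Definition tv_span2 (p : tpair) : seq tvec :=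
  [seq tv_add (tv_scale k p.1) (tv_scale l p.2) | k <- ft_enum T, l <- ft_enum T].

Definition tv_subpred (P Q : pred tvec) : bool := all (fun z => P z ==> Q z) tv_enum.

Definition tv_eqpred (P Q : pred tvec) : bool := all (fun z => P z == Q z) tv_enum.

Definition tv_same_span (p q : tpair) : bool :=
  [&& p.1 \in tv_span2 q, p.2 \in tv_span2 q, q.1 \in tv_span2 p & q.2 \in tv_span2 p].

Definition tv_indep (p : tpair) : bool := (p.1 != tv0) && (p.2 \notin tv_span1 p.1).

Definition tv_in_plane (p : tpair) (c : tvec) : bool :=
  (tv_dot p.1 c == ft_zero T) && (tv_dot p.2 c == ft_zero T).

Definition tmx_unit (r : tmx) : bool :=
  all (fun z => (tv_mulmx z r == tv0) ==> (z == tv0)) tv_enum.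

End TableVectors.

Lemma vec4D (R : nzRingType) (a b c d a' b' c' d' : R) :
  vec4 a b c d + vec4 a' b' c' d' = vec4 (a + a') (b + b') (c + c') (d + d').
Proof. by apply/rowP => i; rewrite !mxE; case: i => [[|[|[|[|]]]] ?]. Qed.

Lemma vec4Z (R : nzRingType) (k a b c d : R) :
  k *: vec4 a b c d = vec4 (k * a) (k * b) (k * c) (k * d).
Proof. by apply/rowP => i; rewrite !mxE; case: i => [[|[|[|[|]]]] ?]. Qed.

Lemma vec4_inj (R : nzRingType) (a b c d a' b' c' d' : R) :
  vec4 a b c d = vec4 a' b' c' d' -> [/\ a = a', b = b', c = c' & d = d'].
Proof.
move=> /rowP e; split; [move: (e 0) | move: (e 1) | move: (e 2%:R) | move: (e 3%:R)];
  by rewrite !mxE.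
Qed.

Lemma scalar_mx1_eq0 (R : nzRingType) (a : R) : (a%:M == 0 :> 'M_1) = (a == 0).
Proof.
by apply/eqP/eqP => [/matrixP/(_ 0 0)|->]; rewrite ?mxE ?raddf0.
Qed.

Record faithful_encoding (F : fieldType) (T : field_table) (enc : ft_sort T -> F) :
    Prop := FaithfulEncoding {
  encD : forall a b, enc (ft_add a b) = enc a + enc b;
  encM : forall a b, enc (ft_mul a b) = enc a * enc b;
  enc0 : enc (ft_zero T) = 0;
  enc_inj : injective enc;
  enc_surj : forall x, exists e, enc e = x;
  ft_enumP : forall e, e \in ft_enum T }.

Section Encoding.
Variables (F : fieldType) (T : field_table) (enc : ft_sort T -> F).
Hypothesis encP : faithful_encoding enc.

Definition tv_row (v : tvec T) : 'rV[F]_4 :=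
  let '(a, b, c, d) := v in vec4 (enc a) (enc b) (enc c) (enc d).

Definition tline (p : tpair T) : 'M[F]_4 := <<col_mx (tv_row p.1) (tv_row p.2)>>%MS.

Definition tmx_mx (r : tmx T) : 'M[F]_4 :=
  let '(r0, r1, r2, r3) := r in
  \matrix_(i < 4, j < 4) ([:: tv_row r0; tv_row r1; tv_row r2; tv_row r3]`_i) 0 j.

Lemma tv_enumP v : v \in tv_enum T.
Proof.
have fT := ft_enumP encP; case: v => [[[a b] c] d].
by do 3!(apply: allpairs_f; last exact: fT); exact: fT.
Qed.

Lemma tv_rowD u v : tv_row (tv_add u v) = tv_row u + tv_row v.
Proof.
by case: u => [[[a b] c] d]; case: v => [[[a' b'] c'] d']; rewrite /= vec4D !(encD encP).
Qed.

Lemma tv_rowZ k u : tv_row (tv_scale k u) = enc k *: tv_row u.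
Proof. by case: u => [[[a b] c] d]; rewrite /= vec4Z !(encM encP). Qed.

Lemma tv_row_inj : injective tv_row.
Proof.
have encI := enc_inj encP.
by case=> [[[a b] c] d] [[[a' b'] c'] d'] /= /vec4_inj[/encI-> /encI-> /encI-> /encI->].
Qed.

Lemma tv_row_surj (w : 'rV[F]_4) : exists v, w = tv_row v.
Proof.
have [a ea] := enc_surj encP (w 0 0); have [b eb] := enc_surj encP (w 0 1).
have [c ec] := enc_surj encP (w 0 2%:R); have [d ed] := enc_surj encP (w 0 3%:R).
exists (a, b, c, d); apply/rowP => i; rewrite /= !mxE.
case: i => [[|[|[|[|]]]] Hi] //=; rewrite ?ea ?eb ?ec ?ed //.
all: by congr (w 0 _); apply: val_inj.
Qed.

Lemma tv_row_eq0 v : (tv_row v == 0) = (v == tv0 T).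
Proof.
have -> : 0 = tv_row (tv0 T) by rewrite /= (enc0 encP); apply/rowP => i; rewrite !mxE;
  case: i => [[|[|[|[|]]]] ?].
by rewrite (inj_eq tv_row_inj).
Qed.

Lemma enc_eq0 e : (enc e == 0) = (e == ft_zero T).
Proof. by rewrite -(enc0 encP) (inj_eq (enc_inj encP)). Qed.

Lemma tv_dotE u v : tv_row u *m (tv_row v)^T = (enc (tv_dot u v))%:M.
Proof.
case: u => [[[a b] c] d]; case: v => [[[a' b'] c'] d'].
apply/matrixP => i j; rewrite !ord1 !mxE /= !(encD encP) !(encM encP).
by rewrite !big_ord_recr big_ord0 /= !mxE /= add0r !addrA.
Qed.

Lemma tv_span1E z u : (tv_row z <= tv_row u)%MS = (z \in tv_span1 u).
Proof.
apply/sub_rVP/mapP => [[a ea]|[k _ ->]]; last by exists (enc k); rewrite tv_rowZ.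
have [k ek] := enc_surj encP a; exists k; first exact: ft_enumP encP k.
by apply: tv_row_inj; rewrite tv_rowZ ek.
Qed.

Lemma tv_span2E z p :
  (tv_row z <= col_mx (tv_row p.1) (tv_row p.2))%MS = (z \in tv_span2 p).
Proof.
rewrite -addsmxE; apply/sub_addsmxP/allpairsP => [[[x y] /= e]|[[k l] [_ _ /= ->]]].
- have [k ek] := enc_surj encP (x 0 0); have [l el] := enc_surj encP (y 0 0).
  exists (k, l); split; rewrite /= ?(ft_enumP encP) //.
  apply: tv_row_inj; rewrite e tv_rowD !tv_rowZ ek el.
  by rewrite -!mul_scalar_mx -!mx11_scalar.
- by exists ((enc k)%:M, (enc l)%:M); rewrite /= tv_rowD !tv_rowZ !mul_scalar_mx.
Qed.

Lemma tv_ker1E z c : (tv_row z <= kermx (tv_row c)^T)%MS = (tv_dot z c == ft_zero T).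
Proof. by rewrite sub_kermx tv_dotE scalar_mx1_eq0 enc_eq0. Qed.

Lemma tv_ker2E z c d :
  (tv_row z <= kermx (row_mx (tv_row c)^T (tv_row d)^T))%MS =
  (tv_dot z c == ft_zero T) && (tv_dot z d == ft_zero T).
Proof. by rewrite sub_kermx mul_mx_row row_mx_eq0 !tv_dotE !scalar_mx1_eq0 !enc_eq0. Qed.

Section SubspacesByMembership.
Variables (m n : nat) (A : 'M[F]_(m, 4)) (B : 'M[F]_(n, 4)) (P Q : pred (tvec T)).
Hypotheses (AP : forall z, (tv_row z <= A)%MS = P z) (BQ : forall z, (tv_row z <= B)%MS = Q z).

Lemma submx_tvE : (A <= B)%MS = tv_subpred P Q.
Proof.
apply/idP/allP => [sAB z _|PQ]; first by apply/implyP; rewrite -AP -BQ => /submx_trans; apply.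
apply/row_subP => i; have [v ev] := tv_row_surj (row i A).
by rewrite ev BQ; apply: (implyP (PQ v (tv_enumP v))); rewrite -AP -ev row_sub.
Qed.

End SubspacesByMembership.

Lemma eqmx_tvE m n (A : 'M[F]_(m, 4)) (B : 'M[F]_(n, 4)) P Q :
  (forall z, (tv_row z <= A)%MS = P z) -> (forall z, (tv_row z <= B)%MS = Q z) ->
  (A == B)%MS = tv_eqpred P Q.
Proof.
move=> AP BQ; rewrite (submx_tvE AP BQ) (submx_tvE BQ AP) -all_predI.
by apply: eq_all => z /=; case: (P z); case: (Q z).
Qed.

Lemma tlineE p z : (tv_row z <= tline p)%MS = (z \in tv_span2 p).
Proof. by rewrite genmxE tv_span2E. Qed.

Lemma tline_eqmx p q :
  (tline p == col_mx (tv_row q.1) (tv_row q.2))%MS = tv_same_span p q.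
Proof. by rewrite genmxE !col_mx_sub !tv_span2E !tlineE /tv_same_span !andbA. Qed.

Lemma tline_eq p q : (tline p == tline q) = tv_same_span p q.
Proof.
rewrite -tline_eqmx /tline; apply/eqP/idP => [->|/genmxP]; last by rewrite genmx_id.
exact/eqmxP/genmxE.
Qed.

Lemma tv_gen_eq a b :
  (<<tv_row a>>%MS == <<tv_row b>>%MS) = (a \in tv_span1 b) && (b \in tv_span1 a).
Proof. by rewrite -!tv_span1E; apply/eqP/genmxP. Qed.

Lemma tv_indep_rank p : tv_indep p -> \rank (col_mx (tv_row p.1) (tv_row p.2)) = 2.
Proof.
case/andP => p1 p2; have s1 : (tv_row p.1 <= col_mx (tv_row p.1) (tv_row p.2))%MS.
  by rewrite -addsmxE addsmxSl.
have := ltn_leqif (mxrank_leqif_sup s1).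
rewrite col_mx_sub submx_refl tv_span1E (negbTE p2) rank_rV tv_row_eq0 p1 => lt1.
by apply/eqP; rewrite eqn_leq lt1 andbT rank_leq_row.
Qed.

Lemma tline_of_rank2 (L : 'M[F]_4) :
  <<L>>%MS = L -> \rank L = 2 -> exists2 p, tv_indep p & L = tline p.
Proof.
move=> gL rL; have : ~~ (L <= (0 : 'M[F]_4))%MS.
  by rewrite submx0; apply: contra_eqN rL => /eqP->; rewrite mxrank0.
case/row_subPn => i; rewrite submx0 => ri0; have [x ex] := tv_row_surj (row i L).
have : ~~ (L <= tv_row x)%MS by apply/negP => /mxrankS; rewrite rL rank_rV; case: (_ != 0).
case/row_subPn => j nj; have [y ey] := tv_row_surj (row j L).
have indep : tv_indep (x, y) by rewrite /tv_indep /= -tv_row_eq0 -ex ri0 -tv_span1E -ey.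
exists (x, y) => //; have sL : (col_mx (tv_row x) (tv_row y) <= L)%MS.
  by rewrite col_mx_sub -ex -ey !row_sub.
rewrite -gL /tline; apply/genmxP; rewrite sL andbT.
by rewrite -(mxrank_leqif_sup sL).2 (tv_indep_rank indep) rL.
Qed.

Lemma tv_mulmxE z r : tv_row z *m tmx_mx r = tv_row (tv_mulmx z r).
Proof.
case: r => [[[r0 r1] r2] r3]; case: z => [[[a b] c] d].
rewrite /tv_mulmx !tv_rowD !tv_rowZ; apply/rowP => j.
by rewrite !mxE !big_ord_recr big_ord0 /= !mxE /= add0r !addrA.
Qed.

Lemma tmx_mx_surj (A : 'M[F]_4) : exists r, A = tmx_mx r.
Proof.
have [r0 e0] := tv_row_surj (row 0 A); have [r1 e1] := tv_row_surj (row 1 A).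
have [r2 e2] := tv_row_surj (row 2%:R A); have [r3 e3] := tv_row_surj (row 3%:R A).
exists (r0, r1, r2, r3); apply/matrixP => i j; rewrite /= mxE.
case: i => [[|[|[|[|]]]] Hi] //=; rewrite -?e0 -?e1 -?e2 -?e3 mxE //.
all: by congr (A _ j); apply: val_inj.
Qed.

Lemma tmx_unitE r : (tmx_mx r \in unitmx) = tmx_unit r.
Proof.
rewrite -row_free_unit -kermx_eq0 -submx0.
apply: submx_tvE => z; first by rewrite sub_kermx tv_mulmxE tv_row_eq0.
by rewrite submx0 tv_row_eq0.
Qed.

Lemma tline_mulmx p r : <<tline p *m tmx_mx r>>%MS = tline (tpair_mulmx p r).
Proof.
apply/genmxP; rewrite /tpair_mulmx /= -!tv_mulmxE -mul_col_mx.
by apply/andP; split; rewrite (eqmxMr _ (genmxE _)) submx_refl.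
Qed.

End Encoding.

Lemma exists_encE (F : finFieldType) T (enc : ft_sort T -> F) (P : pred F) :
  faithful_encoding enc -> [exists x, P x] = has (fun e => P (enc e)) (ft_enum T).
Proof.
move=> encP; apply/existsP/hasP => [[x Px]|[e _ Pe]]; last by exists (enc e).
by have [e ex] := enc_surj encP x; exists e; rewrite ?(ft_enumP encP) ?ex.
Qed.

(** * The twisted cubic in characteristic 2 *)

(* In characteristic 2 the osculating plane [(1, -3t, 3t^2, -t^3)] and the tangent
   direction [(3t^2, 2t, 1, 0)] become [(1, t, t^2, t^3)] and [(t^2, 0, 1, 0)]. *)
Definition tv_Pc T (e : ft_sort T) : tvec T :=
  (ft_mul e (ft_mul e e), ft_mul e e, e, ft_one T).
Definition tv_osc T (e : ft_sort T) : tvec T :=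
  (ft_one T, e, ft_mul e e, ft_mul e (ft_mul e e)).
Definition tv_Tdir T (e : ft_sort T) : tvec T := (ft_mul e e, ft_zero T, ft_one T, ft_zero T).

Section TwistedCubicChar2.
Variables (F : fieldType) (T : field_table) (enc : ft_sort T -> F).
Hypotheses (encM : forall a b, enc (ft_mul a b) = enc a * enc b)
  (enc0 : enc (ft_zero T) = 0) (enc1 : enc (ft_one T) = 1) (char2 : 2 \in [pchar F]).

Let three1 : 3%:R = 1 :> F.
Proof. by rewrite -[3%N]/(2 + 1)%N natrD (pcharf0 char2) add0r. Qed.

Lemma Pc_tv e : Pc (Some (enc e)) = tv_row enc (tv_Pc e).
Proof. by rewrite /= !encM enc1 -!expr2 -exprS. Qed.

Lemma osc_tv e : osc (Some (enc e)) = tv_row enc (tv_osc e).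
Proof. by rewrite /= !encM enc1 three1 !mul1r !(oppr_pchar2 char2) -!expr2 -exprS. Qed.

Lemma Tdir_tv e : Tdir (Some (enc e)) = tv_row enc (tv_Tdir e).
Proof. by rewrite /= !encM enc0 enc1 three1 (pcharf0 char2) mul1r mul0r -expr2. Qed.

End TwistedCubicChar2.

(** * The field F_2 and the lines of PG(3,2) *)

Definition F2_table : field_table := FieldTable [:: false; true] addb andb false true.

Definition F2_of_bool (b : ft_sort F2_table) : 'F_2 := (b : bool)%:R.

Lemma F2_cases (x : 'F_2) : x = 0 \/ x = 1.
Proof. by case: x => [[|[|n]]] //= ?; [left|right]; apply/val_inj. Qed.

Lemma F2_pchar : 2 \in [pchar 'F_2].
Proof. exact: pchar_Fp. Qed.

Lemma F2_of_bool_encoding : faithful_encoding F2_of_bool.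
Proof.
split=> //.
- by do 2!case; rewrite /F2_of_bool /= ?addr0 ?add0r //; apply/eqP.
- by do 2!case; rewrite /F2_of_bool /= ?mulr1 ?mulr0.
- by move=> [] [] // /eqP; rewrite /F2_of_bool /= ?oner_eq0 // eq_sym oner_eq0.
- by move=> x; case: (F2_cases x) => ->; [exists false | exists true].
- by case.
Qed.

Lemma F2_of_bool1 : F2_of_bool (ft_one F2_table) = 1.
Proof. exact: mulr1n. Qed.

Notation tvec2 := (tvec F2_table).
Notation tpair2 := (tpair F2_table).
Notation tmx2 := (tmx F2_table).
Notation row2 := (tv_row F2_of_bool).
Notation line2 := (tline F2_of_bool).

Definition params2 : seq (option bool) := [:: None; Some false; Some true].

Definition tPc2 (t : option bool) : tvec2 :=
  if t is Some e then tv_Pc (T := F2_table) e else (true, false, false, false).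
Definition tosc2 (t : option bool) : tvec2 :=
  if t is Some e then tv_osc (T := F2_table) e else (false, false, false, true).
Definition tTdir2 (t : option bool) : tvec2 :=
  if t is Some e then tv_Tdir (T := F2_table) e else (false, true, false, false).

Lemma params2P t : t \in params2.
Proof. by case: t => [[]|]. Qed.

Lemma Pc_F2 t : Pc (omap F2_of_bool t) = row2 (tPc2 t).
Proof. by case: t => [e|] //; exact: Pc_tv (encM F2_of_bool_encoding) F2_of_bool1 e. Qed.

Lemma osc_F2 t : osc (omap F2_of_bool t) = row2 (tosc2 t).
Proof.
by case: t => [e|] //; exact: osc_tv (encM F2_of_bool_encoding) F2_of_bool1 F2_pchar e.
Qed.

Lemma Tdir_F2 t : Tdir (omap F2_of_bool t) = row2 (tTdir2 t).
Proof.
case: t => [e|] //.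
exact: Tdir_tv (encM F2_of_bool_encoding) (enc0 F2_of_bool_encoding) F2_of_bool1 F2_pchar e.
Qed.

Lemma omap_F2_surj (t : option 'F_2) : exists e, t = omap F2_of_bool e.
Proof.
case: t => [x|]; last by exists None.
by case: (F2_cases x) => ->; [exists (Some false) | exists (Some true)].
Qed.

Lemma existsF2E (P : pred (option 'F_2)) :
  [exists t, P t] = has (fun e => P (omap F2_of_bool e)) params2.
Proof.
apply/existsP/hasP => [[t Pt]|[e _ Pe]]; last by exists (omap F2_of_bool e).
by have [e et] := omap_F2_surj t; exists e; rewrite ?params2P -?et.
Qed.

Lemma tv_span1_F2 (b : tvec2) : tv_span1 b = [:: tv0 F2_table; b].
Proof. by case: b => [[[x y] z] w]. Qed.

Lemma row2_gen_eq a b : (<<row2 a>>%MS == <<row2 b>>%MS) = (a == b).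
Proof.
rewrite (tv_gen_eq F2_of_bool_encoding) !tv_span1_F2 !inE.
case: (eqVneq a b) => [->|ab]; rewrite ?orbT ?orbF //.
by apply: contraNF ab => /andP[/eqP-> /eqP->].
Qed.

Lemma in_plane_line2 p c : in_plane (line2 p) (row2 c) = tv_in_plane p c.
Proof.
by rewrite /in_plane -sub_kermx genmxE col_mx_sub !(tv_ker1E F2_of_bool_encoding).
Qed.

Lemma card_params2_imset (h : option bool -> tvec2) (P : pred (option bool)) :
  injective h -> #|[set <<row2 (h e)>>%MS | e : option bool & P e]| = count P params2.
Proof.
move=> hI; rewrite card_imset; last by move=> e e' /eqP; rewrite row2_gen_eq => /eqP/hI.
rewrite -size_filter -(card_uniqP (filter_uniq P (isT : uniq params2))).
by apply: eq_card => e; rewrite !inE mem_filter params2P andbT.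
Qed.

Lemma cubic_F2 : cubic 'F_2 = [set <<row2 (tPc2 e)>>%MS | e : option bool].
Proof.
apply/setP => X; apply/imsetP/imsetP => [[t _ ->]|[e _ ->]].
- by have [e ->] := omap_F2_surj t; exists e; rewrite ?Pc_F2.
- by exists (omap F2_of_bool e); rewrite ?Pc_F2.
Qed.

Definition ncub_rep (p : tpair2) : nat := count (fun e => tPc2 e \in tv_span2 p) params2.

Definition nGamma_rep (p : tpair2) : nat := count (fun e => tv_in_plane p (tosc2 e)) params2.

Lemma ncub_line2 p : ncub (line2 p) = ncub_rep p.
Proof.
rewrite /ncub_rep -(@card_params2_imset tPc2); last by do 2!case=> [[]|] //.
apply: eq_card => X; rewrite !inE cubic_F2.
apply/andP/imsetP => [[/imsetP[e _ ->]]|[e]].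
- by rewrite genmxE (tlineE F2_of_bool_encoding) => pe; exists e; rewrite 1?inE.
- by rewrite inE -(tlineE F2_of_bool_encoding) -genmxE => pe ->; rewrite imset_f.
Qed.

Lemma nGamma_line2 p : nGamma (line2 p) = nGamma_rep p.
Proof.
rewrite /nGamma_rep -(eq_count (fun e => in_plane_line2 p (tosc2 e))).
rewrite -(@card_params2_imset tosc2); last by do 2!case=> [[]|] //.
apply: eq_card => X; apply/imsetP/imsetP => [[t]|[e]].
- by have [e ->] := omap_F2_surj t; rewrite inE osc_F2 => pe ->; exists e; rewrite 1?inE.
- by rewrite inE => pe ->; exists (omap F2_of_bool e); rewrite 1?inE osc_F2.
Qed.

(* A point [bits4 n] has the binary digits of [n] as coordinates, lowest digit first. *)
Definition bits4 (n : nat) : tvec2 := (odd n, odd (n %/ 2), odd (n %/ 4), odd (n %/ 8)).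

Definition line_reps : seq tpair2 := [seq (bits4 p.1, bits4 p.2) | p <- [::
  (8, 4); (8, 2); (8, 6); (8, 1); (8, 5); (8, 3); (8, 7); (4, 2); (4, 10); (4, 1);
  (4, 9); (4, 3); (4, 11); (12, 2); (12, 10); (12, 1); (12, 9); (12, 3); (12, 11);
  (2, 1); (2, 9); (2, 5); (2, 13); (10, 1); (10, 9); (10, 5); (10, 13); (6, 1);
  (6, 9); (6, 5); (6, 13); (14, 1); (14, 9); (14, 5); (14, 13)]%N].

Lemma line_reps_indep : all (@tv_indep _) line_reps.
Proof. by vm_compute. Qed.

Lemma line_reps_complete :
  all (fun x => all (fun y => tv_indep (x, y) ==> has (tv_same_span (x, y)) line_reps)
                    (tv_enum F2_table)) (tv_enum F2_table).
Proof. by vm_compute. Qed.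

Definition lineset (s : seq tpair2) : {set 'M['F_2]_4} := [set X in map line2 s].

Lemma line2_lines p : tv_indep p -> line2 p \in lines 'F_2.
Proof.
by move=> ip; rewrite inE genmx_id eqxx genmxE (tv_indep_rank F2_of_bool_encoding ip).
Qed.

Lemma linesE : lines 'F_2 = lineset line_reps.
Proof.
apply/setP => L; rewrite [RHS]inE; apply/idP/mapP => [|[q qL ->]]; last first.
  exact/line2_lines/(allP line_reps_indep).
rewrite inE => /andP[/eqP gL /eqP rL].
have [[x y] ip ->] := tline_of_rank2 F2_of_bool_encoding gL rL.
have /allP/(_ y (tv_enumP F2_of_bool_encoding y)) :=
  allP line_reps_complete x (tv_enumP F2_of_bool_encoding x).
rewrite ip => /hasP[q qL pq]; exists q => //.
by apply/eqP; rewrite (tline_eq F2_of_bool_encoding).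
Qed.

Lemma line_reps_lines q : q \in line_reps -> line2 q \in lines 'F_2.
Proof. by move=> qL; rewrite linesE inE map_f. Qed.

Lemma lineset_filter (P : pred 'M['F_2]_4) (Q : pred tpair2) :
  {subset P <= lines 'F_2} -> {in line_reps, forall q, P (line2 q) = Q q} ->
  [set L | P L] = lineset (filter Q line_reps).
Proof.
move=> Pl PQ; apply/setP => L; rewrite !inE; apply/idP/mapP => [PL|[q]].
- have := Pl L PL; rewrite linesE inE => /mapP[q qL eL].
  by exists q; rewrite // mem_filter -PQ // -eL PL.
- by rewrite mem_filter => /andP[Qq qL] ->; rewrite PQ.
Qed.

Lemma setU_lineset (A B : {set 'M['F_2]_4}) s1 s2 :
  A = lineset s1 -> B = lineset s2 -> A :|: B = lineset (s1 ++ s2).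
Proof. by move=> -> ->; apply/setP => X; rewrite !inE map_cat mem_cat. Qed.

Lemma card_lineset s n :
  pairwise (fun p q => ~~ tv_same_span p q) s -> size s = n -> #|lineset s| = n.
Proof.
move=> ds <-; rewrite cardsE (card_uniqP _) ?size_map // uniq_pairwise pairwise_map.
by apply: sub_pairwise ds => p q /=; rewrite (tline_eq F2_of_bool_encoding).
Qed.

(** * The field F_4, imaginary chords and axes *)

(* [(a, b)] stands for [a + b w], where [w ^+ 2 = w + 1]. *)
Definition F4_table : field_table :=
  FieldTable [:: (false, false); (true, false); (false, true); (true, true)]
    (fun a b : bool * bool => (a.1 (+) b.1, a.2 (+) b.2))
    (fun a b : bool * bool =>
       ((a.1 && b.1) (+) (a.2 && b.2), (a.1 && b.2) (+) (a.2 && b.1) (+) (a.2 && b.2)))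
    (false, false) (true, false).

Section F4Encoding.
Variables (K : finFieldType) (w : K).
Hypotheses (hK : #|K| = 4%N) (char2 : 2 \in [pchar K]) (w0 : w != 0) (w1 : w != 1).

Lemma F4_generator_sqr : w ^+ 2 = w + 1.
Proof.
have w3 : w ^+ 3 = 1.
  have : w * (w ^+ 3 - 1) = 0 by rewrite mulrBr mulr1 -exprS -hK expf_card subrr.
  by move/eqP; rewrite mulf_eq0 (negbTE w0) subr_eq0 => /eqP.
have two0 : 2%:R = 0 :> K := pcharf0 char2.
have : (w - 1) * (w ^+ 2 - (w + 1)) = w ^+ 3 - 1 + 2%:R * (1 - w ^+ 2) by ring.
by rewrite w3 subrr two0 mul0r addr0 => /eqP; rewrite mulf_eq0 !subr_eq0 (negbTE w1) => /eqP.
Qed.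

Definition F4_enc (e : ft_sort F4_table) : K := (e.1 : bool)%:R + (e.2 : bool)%:R * w.

Lemma F4_enc_eq0 e : F4_enc e = 0 -> e = (false, false).
Proof.
case: e => [[] []] //; rewrite /F4_enc /= ?mul1r ?mul0r ?addr0 ?add0r.
- by move/eqP; rewrite addr_eq0 (oppr_pchar2 char2) eq_sym (negbTE w1).
- by move/eqP; rewrite oner_eq0.
- by move/eqP; rewrite (negbTE w0).
Qed.

Lemma F4_enc_encoding : faithful_encoding F4_enc.
Proof.
have two0 := pcharf0 char2; have ww := F4_generator_sqr.
have encD a b : F4_enc (ft_add a b) = F4_enc a + F4_enc b.
  by case: a b => [[] []] [[] []]; rewrite /F4_enc /= ?mulr1n ?mulr0n; ring: two0.
have encI : injective F4_enc.
  move=> a b eab; have : F4_enc (ft_add a b) = 0.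
    by rewrite encD eab -mulr2n -mulr_natr two0 mulr0.
  by move/F4_enc_eq0; case: a b {eab} => [[] []] [[] []].
split=> //.
- by case=> [[] []] [[] []]; rewrite /F4_enc /= ?mulr1n ?mulr0n; ring: two0 ww.
- by rewrite /F4_enc /= mulr0n mul0r addr0.
- move=> x; have : x \in [set F4_enc e | e : bool * bool].
    suff -> : [set F4_enc e | e : bool * bool] = setT by rewrite inE.
    apply/eqP; rewrite eqEcard subsetT cardsT hK card_imset //.
    by rewrite card_prod card_bool.
  by case/imsetP=> e _ ->; exists e.
- by case=> [[] []].
Qed.

End F4Encoding.

Lemma F4_generator (K : finFieldType) : #|K| = 4%N -> exists2 w : K, w != 0 & w != 1.
Proof.
move=> hK; have : ~~ ([set: K] \subset [set 0; 1]).
  by apply/negP => /subset_leq_card; rewrite cardsT hK cards2 eq_sym oner_eq0.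
by case/subsetPn => x _; rewrite !inE negb_or => /andP[x0 x1]; exists x.
Qed.

Definition tv_lift (v : tvec2) : tvec F4_table :=
  let '(a, b, c, d) := v in ((a, false), (b, false), (c, false), (d, false)).

Definition tpair_lift (p : tpair2) : tpair F4_table := (tv_lift p.1, tv_lift p.2).

Definition is_IC_rep (q : tpair2) : bool :=
  has (fun e : ft_sort F4_table =>
         e.2 && tv_same_span (tpair_lift q) (tv_Pc e, tv_Pc (ft_mul e e)))
    (ft_enum F4_table).

Definition is_IA_rep (q : tpair2) : bool :=
  has (fun e : ft_sort F4_table =>
         e.2 && tv_eqpred (fun z => z \in tv_span2 (tpair_lift q))
         (fun z => (tv_dot z (tv_osc e) == ft_zero _) &&
                   (tv_dot z (tv_osc (ft_mul e e)) == ft_zero _)))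
    (ft_enum F4_table).

Section ImaginaryLines.
Variables (K : finFieldType) (f : {rmorphism 'F_2 -> K}) (w : K).
Hypotheses (hK : #|K| = 4%N) (w0 : w != 0) (w1 : w != 1).

Let char2 : 2 \in [pchar K] := rmorph_pchar f F2_pchar.
Let encP := F4_enc_encoding hK char2 w0 w1.
Let enc1 : F4_enc w (ft_one F4_table) = 1.
Proof. by rewrite /F4_enc /= mulr0n mul0r addr0. Qed.

Lemma map_row2 v : map_mx f (row2 v) = tv_row (F4_enc w) (tv_lift v).
Proof.
case: v => [[[a b] c] d]; apply/rowP => i; rewrite !mxE.
by case: i => [[|[|[|[|]]]] ?] //=; rewrite rmorph_nat /F4_enc /= mulr0n mul0r addr0.
Qed.

Lemma F4_enc_codom e : (F4_enc w e \in codom f) = ~~ e.2.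
Proof.
apply/codomP/idP => [[x]|].
- have encI := enc_inj encP.
  by case: (F2_cases x) => ->; rewrite ?rmorph0 ?rmorph1 -?(enc0 encP) -?enc1 => /encI->.
- case: e => [[] []] //= _; [exists 1 | exists 0].
  + by rewrite rmorph1.
  + by rewrite rmorph0 (enc0 encP).
Qed.

Lemma map_line2 q : (map_mx f (line2 q) :=: tline (F4_enc w) (tpair_lift q))%MS.
Proof. by apply: eqmx_trans (map_genmx f _) _; rewrite map_col_mx !map_row2. Qed.

Lemma F4_enc_frobenius e : F4_enc w e ^+ #|'F_2| = F4_enc w (ft_mul e e).
Proof. by rewrite card_Fp // expr2 (encM encP). Qed.

Lemma is_IC_line2 q : is_IC f (line2 q) = (line2 q \in lines 'F_2) && is_IC_rep q.
Proof.
congr (_ && _); rewrite (exists_encE _ encP); apply: eq_has => e.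
rewrite F4_enc_codom negbK F4_enc_frobenius !(Pc_tv (encM encP) enc1).
by rewrite !map_line2 -(tline_eqmx encP _ (tv_Pc e, tv_Pc (ft_mul e e))).
Qed.

Lemma is_IA_line2 q : is_IA f (line2 q) = (line2 q \in lines 'F_2) && is_IA_rep q.
Proof.
congr (_ && _); rewrite (exists_encE _ encP); apply: eq_has => e.
rewrite F4_enc_codom negbK F4_enc_frobenius !(osc_tv (encM encP) enc1 char2) !map_line2.
by rewrite (eqmx_tvE encP (tlineE encP _) (fun z => tv_ker2E encP z _ _)).
Qed.

End ImaginaryLines.

(** * The classes of lines *)

Definition is_RC_rep (q : tpair2) : bool :=
  has (fun e => has (fun e' => (tPc2 e != tPc2 e') && tv_same_span q (tPc2 e, tPc2 e'))
         params2) params2.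

Definition is_Tr_rep (q : tpair2) : bool :=
  has (fun e => tv_same_span q (tPc2 e, tTdir2 e)) params2.

Definition is_RA_rep (q : tpair2) : bool :=
  has (fun e => has (fun e' => (tosc2 e != tosc2 e') &&
         tv_eqpred (fun z => z \in tv_span2 q)
           (fun z => (tv_dot z (tosc2 e) == false) && (tv_dot z (tosc2 e') == false)))
         params2) params2.

Definition is_UG_rep (q : tpair2) : bool :=
  [&& ncub_rep q == 1%N, ~~ is_Tr_rep q & nGamma_rep q != 0%N].

Definition plane_x1x2 : tvec2 := (false, true, true, false).

Lemma plane_x1x2_F2 : vec4 0 1 (-1) 0 = row2 plane_x1x2.
Proof. by rewrite /= (oppr_pchar2 F2_pchar). Qed.

Definition is_UG2_rep (q : tpair2) : bool := is_UG_rep q && tv_in_plane q plane_x1x2.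
Definition is_UG1_rep (q : tpair2) : bool := is_UG_rep q && ~~ tv_in_plane q plane_x1x2.

Definition is_UnG_rep (q : tpair2) : bool := (ncub_rep q == 1%N) && (nGamma_rep q == 0%N).
Definition is_EG_rep (q : tpair2) : bool := (ncub_rep q == 0%N) && (nGamma_rep q == 1%N).
Definition is_EnG_rep (q : tpair2) : bool :=
  [&& ncub_rep q == 0%N, nGamma_rep q == 0%N, ~~ is_IC_rep q & ~~ is_IA_rep q].

Section LineReps.
Variable q : tpair2.
Hypothesis qL : q \in line_reps.

Let q_line : line2 q \in lines 'F_2 := line_reps_lines qL.

Lemma is_RC_line2 : is_RC (line2 q) = is_RC_rep q.
Proof.
rewrite /is_RC q_line existsF2E; apply: eq_has => e; rewrite existsF2E; apply: eq_has => e'.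
by rewrite !Pc_F2 row2_gen_eq (tline_eqmx F2_of_bool_encoding _ (_, _)).
Qed.

Lemma is_Tr_line2 : is_Tr (line2 q) = is_Tr_rep q.
Proof.
rewrite /is_Tr q_line existsF2E; apply: eq_has => e.
by rewrite Pc_F2 Tdir_F2 (tline_eqmx F2_of_bool_encoding _ (_, _)).
Qed.

Lemma is_RA_line2 : is_RA (line2 q) = is_RA_rep q.
Proof.
rewrite /is_RA q_line existsF2E; apply: eq_has => e; rewrite existsF2E; apply: eq_has => e'.
rewrite !osc_F2 row2_gen_eq.
by rewrite (eqmx_tvE F2_of_bool_encoding (tlineE F2_of_bool_encoding q)
                      (fun z => tv_ker2E F2_of_bool_encoding z _ _)).
Qed.

Lemma is_UG_line2 : is_UG (line2 q) = is_UG_rep q.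
Proof. by rewrite /is_UG q_line ncub_line2 nGamma_line2 is_Tr_line2. Qed.

Lemma is_UG2_line2 : is_UG2 (line2 q) = is_UG2_rep q.
Proof. by rewrite /is_UG2 is_UG_line2 plane_x1x2_F2 in_plane_line2. Qed.

Lemma is_UG1_line2 : is_UG1 (line2 q) = is_UG1_rep q.
Proof. by rewrite /is_UG1 is_UG_line2 plane_x1x2_F2 in_plane_line2. Qed.

Lemma is_UnG_line2 : is_UnG (line2 q) = is_UnG_rep q.
Proof. by rewrite /is_UnG q_line ncub_line2 nGamma_line2. Qed.

Lemma is_EG_line2 : is_EG (line2 q) = is_EG_rep q.
Proof. by rewrite /is_EG q_line ncub_line2 nGamma_line2. Qed.

Lemma is_EnG_line2 (K : finFieldType) (f : {rmorphism 'F_2 -> K}) :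
  #|K| = 4%N -> is_EnG f (line2 q) = is_EnG_rep q.
Proof.
move=> hK; have [w w0 w1] := F4_generator hK.
rewrite /is_EnG q_line ncub_line2 nGamma_line2.
by rewrite (is_IC_line2 f hK w0 w1) (is_IA_line2 f hK w0 w1) q_line.
Qed.

End LineReps.

Definition reps_of (P : pred tpair2) : seq tpair2 := filter P line_reps.

Lemma RC_lines : [set L : 'M['F_2]_4 | is_RC L] = lineset (reps_of is_RC_rep).
Proof. by apply: lineset_filter _ is_RC_line2 => L /andP[]. Qed.

Lemma Tr_lines : [set L : 'M['F_2]_4 | is_Tr L] = lineset (reps_of is_Tr_rep).
Proof. by apply: lineset_filter _ is_Tr_line2 => L /andP[]. Qed.

Lemma RA_lines : [set L : 'M['F_2]_4 | is_RA L] = lineset (reps_of is_RA_rep).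
Proof. by apply: lineset_filter _ is_RA_line2 => L /andP[]. Qed.

Lemma UG2_lines : [set L : 'M['F_2]_4 | is_UG2 L] = lineset (reps_of is_UG2_rep).
Proof. by apply: lineset_filter _ is_UG2_line2 => L /andP[/and4P[]]. Qed.

Lemma UG1_lines : [set L : 'M['F_2]_4 | is_UG1 L] = lineset (reps_of is_UG1_rep).
Proof. by apply: lineset_filter _ is_UG1_line2 => L /andP[/and4P[]]. Qed.

Lemma UnG_lines : [set L : 'M['F_2]_4 | is_UnG L] = lineset (reps_of is_UnG_rep).
Proof. by apply: lineset_filter _ is_UnG_line2 => L /and3P[]. Qed.

Lemma EG_lines : [set L : 'M['F_2]_4 | is_EG L] = lineset (reps_of is_EG_rep).
Proof. by apply: lineset_filter _ is_EG_line2 => L /and3P[]. Qed.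

Section ImaginaryClasses.
Variables (K : finFieldType) (f : {rmorphism 'F_2 -> K}).
Hypothesis hK : #|K| = 4%N.

Lemma IC_lines : [set L : 'M['F_2]_4 | is_IC f L] = lineset (reps_of is_IC_rep).
Proof.
have [w w0 w1] := F4_generator hK; apply: lineset_filter => [L /andP[]//|q qL].
by rewrite (is_IC_line2 f hK w0 w1) line_reps_lines.
Qed.

Lemma IA_lines : [set L : 'M['F_2]_4 | is_IA f L] = lineset (reps_of is_IA_rep).
Proof.
have [w w0 w1] := F4_generator hK; apply: lineset_filter => [L /andP[]//|q qL].
by rewrite (is_IA_line2 f hK w0 w1) line_reps_lines.
Qed.

Lemma EnG_lines : [set L : 'M['F_2]_4 | is_EnG f L] = lineset (reps_of is_EnG_rep).
Proof. by apply: lineset_filter (fun q qL => is_EnG_line2 qL f hK) => L /and5P[]. Qed.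

End ImaginaryClasses.

(** * The group G_2 and its line orbits *)

Definition cubic_tvs : seq tvec2 := map tPc2 params2.

Definition tmx_cubic_image (r : tmx2) : seq tvec2 := [seq tv_mulmx v r | v <- cubic_tvs].

Definition in_G2 (r : tmx2) : bool :=
  [&& tmx_unit r, all (mem cubic_tvs) (tmx_cubic_image r)
    & all (mem (tmx_cubic_image r)) cubic_tvs].

Lemma imset_row2_subset (h k : option bool -> tvec2) :
  ([set <<row2 (h e)>>%MS | e : option bool] \subset [set <<row2 (k e)>>%MS | e : option bool])
  = all (mem (map k params2)) (map h params2).
Proof.
apply/subsetP/allP => [hk _ /mapP[e _ ->]|hk _ /imsetP[e _ ->]].
- have /imsetP[e' _ /eqP] : <<row2 (h e)>>%MS \in [set <<row2 (k e)>>%MS | e : option bool].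
    by apply/hk/imsetP; exists e.
  by rewrite row2_gen_eq => /eqP->; apply: map_f (params2P e').
- by have /mapP[e' _ ->] := hk _ (map_f h (params2P e)); apply/imsetP; exists e'.
Qed.

Lemma Gq_F2 r : (tmx_mx F2_of_bool r \in Gq 'F_2) = in_G2 r.
Proof.
rewrite inE (tmx_unitE F2_of_bool_encoding); congr (_ && _).
have -> : [set <<X *m tmx_mx F2_of_bool r>>%MS | X in cubic 'F_2] =
          [set <<row2 (tv_mulmx (tPc2 e) r)>>%MS | e : option bool].
  rewrite cubic_F2 -imset_comp; apply: eq_imset => e /=.
  by rewrite -(tv_mulmxE F2_of_bool_encoding); apply/eq_genmx/eqmxMr/genmxE.
by rewrite cubic_F2 eqEsubset !imset_row2_subset.
Qed.

(* [P(oo)] and [P(0)] are the first and last unit vectors, so the first and last rows of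
   a matrix of [G_2] are points of the cubic. *)
Definition G2_candidates : seq tmx2 :=
  [seq (x, r3) | x <- [seq (y, r2) | y <- [seq (r0, r1) | r0 <- cubic_tvs,
     r1 <- tv_enum F2_table], r2 <- tv_enum F2_table], r3 <- cubic_tvs].

Definition G2 : seq tmx2 := filter in_G2 G2_candidates.

Lemma tv_mulmx_Pinf (r : tmx2) : tv_mulmx (tPc2 None) r = r.1.1.1.
Proof.
by case: r => [[[[[[? ?] ?] ?] [[[? ?] ?] ?]] [[[? ?] ?] ?]] [[[? ?] ?] ?]] /=; rewrite !addbF.
Qed.

Lemma tv_mulmx_P0 (r : tmx2) : tv_mulmx (tPc2 (Some false)) r = r.2.
Proof. by case: r => [[[[[[? ?] ?] ?] [[[? ?] ?] ?]] [[[? ?] ?] ?]] [[[? ?] ?] ?]]. Qed.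

Lemma in_G2_candidates r : in_G2 r -> r \in G2_candidates.
Proof.
case: r => [[[r0 r1] r2] r3] /and3P[_ cub _].
have cub_e e : tv_mulmx (tPc2 e) (r0, r1, r2, r3) \in cubic_tvs.
  by move: cub; rewrite /tmx_cubic_image !all_map => /allP/(_ e (params2P e)).
have r0c := cub_e None; have r3c := cub_e (Some false).
rewrite tv_mulmx_Pinf in r0c; rewrite tv_mulmx_P0 in r3c.
have enumP := tv_enumP F2_of_bool_encoding.
by apply: allpairs_f r3c; apply: allpairs_f (enumP r2); apply: allpairs_f r0c (enumP r1).
Qed.

Lemma Gq_F2E r : (tmx_mx F2_of_bool r \in Gq 'F_2) = (r \in G2).
Proof. by rewrite Gq_F2 mem_filter; case: (boolP (in_G2 r)) => // /in_G2_candidates->. Qed.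

Definition tv_orbit (G : seq tmx2) (c : seq tpair2) : bool :=
  all (fun p => all (fun r => has (tv_same_span (tpair_mulmx p r)) c) G &&
                all (fun q => has (fun r => tv_same_span (tpair_mulmx p r) q) G) c) c.

Lemma line_orbit_line2 c p : tv_orbit G2 c -> p \in c -> line_orbit (line2 p) = lineset c.
Proof.
move=> /allP orb pc; have /andP[/allP into /allP onto] := orb p pc.
have lineE := tline_eq F2_of_bool_encoding; apply/setP => X; rewrite inE.
apply/imsetP/mapP => [[A]|[q qc ->]].
- have [r ->] := tmx_mx_surj F2_of_bool_encoding A; rewrite Gq_F2E => rG ->.
  have /hasP[q qc pq] := into r rG; exists q => //.
  by rewrite (tline_mulmx F2_of_bool_encoding); apply/eqP; rewrite lineE.
- have /hasP[r rG pq] := onto q qc; exists (tmx_mx F2_of_bool r); first by rewrite Gq_F2E.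
  by rewrite (tline_mulmx F2_of_bool_encoding); apply/esym/eqP; rewrite lineE.
Qed.

Definition orbit_classes : seq (seq tpair2) :=
  [:: reps_of is_RC_rep; reps_of is_IA_rep; reps_of is_UG2_rep;
      reps_of is_RA_rep ++ reps_of is_IC_rep;
      (reps_of is_Tr_rep ++ reps_of is_UG1_rep) ++ reps_of is_UnG_rep;
      reps_of is_EG_rep ++ reps_of is_EnG_rep].

Lemma orbit_classes_orbits : all (tv_orbit G2) orbit_classes.
Proof. by vm_compute. Qed.

Lemma orbit_classes_cover : all (fun p => has (fun c => p \in c) orbit_classes) line_reps.
Proof. by vm_compute. Qed.

Lemma orbit_classes_reps : all (fun c => (c != [::]) && all (mem line_reps) c) orbit_classes.
Proof. by vm_compute. Qed.

Lemma orbit_classes_distinct :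
  pairwise (fun c c' => has (fun p => ~~ has (tv_same_span p) c') c) orbit_classes.
Proof. by vm_compute. Qed.

Lemma set_in_seq6 (T : finType) (a1 a2 a3 a4 a5 a6 : T) :
  [set x in [:: a1; a2; a3; a4; a5; a6]] = [set a1; a2; a3; a4; a5; a6].
Proof. by apply/setP => x; rewrite !inE !orbA. Qed.

Lemma line_orbits_F2 : line_orbits 'F_2 = [set X in map lineset orbit_classes].
Proof.
apply/setP => X; rewrite inE; apply/imsetP/mapP => [[L]|[c cc ->]].
- rewrite linesE inE => /mapP[p pL ->] ->.
  have /hasP[c cc pc] := allP orbit_classes_cover p pL.
  by exists c; rewrite // (line_orbit_line2 (allP orbit_classes_orbits c cc) pc).
- have /andP[] := allP orbit_classes_reps c cc; case: c cc => // p c cc _ /allP cL.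
  exists (line2 p); first by apply/line_reps_lines/cL; rewrite mem_head.
  by rewrite (line_orbit_line2 (allP orbit_classes_orbits _ cc) (mem_head _ _)).
Qed.

Lemma uniq_orbit_classes : uniq (map lineset orbit_classes).
Proof.
rewrite uniq_pairwise pairwise_map.
apply: sub_pairwise orbit_classes_distinct => c c' /hasP[p pc np] /=.
apply/eqP => cc'; have : line2 p \in lineset c' by rewrite -cc' inE map_f.
rewrite inE => /mapP[q qc' /eqP]; rewrite (tline_eq F2_of_bool_encoding) => pq.
by case/hasP: np; exists q.
Qed.

Lemma card_line_orbits_F2 : #|line_orbits 'F_2| = 6%N.
Proof. by rewrite line_orbits_F2 cardsE (card_uniqP uniq_orbit_classes). Qed.

Theorem theorem4p4 (K : finFieldType) (f : {rmorphism 'F_2 -> K})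
    (hK : #|K| = 4%N) :
  let L1 := [set L : 'M['F_2]_4 | is_RC L] in
  let L2 := [set L : 'M['F_2]_4 | is_IA f L] in
  let L3 := [set L : 'M['F_2]_4 | is_UG2 L] in
  let L4 := [set L : 'M['F_2]_4 | is_RA L] :|: [set L | is_IC f L] in
  let L5 := [set L : 'M['F_2]_4 | is_Tr L] :|: [set L | is_UG1 L]
              :|: [set L | is_UnG L] in
  let L6 := [set L : 'M['F_2]_4 | is_EG L] :|: [set L | is_EnG f L] in
  [/\ line_orbits 'F_2 = [set L1; L2; L3; L4; L5; L6],
      #|line_orbits 'F_2| = 6%N,
      [/\ #|L1| = 3%N, #|L2| = 1%N, #|L3| = 3%N &
          [/\ #|L4| = 4%N, #|L5| = 12%N & #|L6| = 12%N]] &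
      [/\ #|[set L : 'M['F_2]_4 | is_RA L]| = 3%N,
          #|[set L : 'M['F_2]_4 | is_IC f L]| = 1%N,
          #|[set L : 'M['F_2]_4 | is_Tr L]| = 3%N,
          #|[set L : 'M['F_2]_4 | is_UG1 L]| = 3%N &
          [/\ #|[set L : 'M['F_2]_4 | is_UnG L]| = 6%N,
              #|[set L : 'M['F_2]_4 | is_EG L]| = 6%N &
              #|[set L : 'M['F_2]_4 | is_EnG f L]| = 6%N]]].
Proof.
move=> L1 L2 L3 L4 L5 L6.
have E1 : L1 = lineset (reps_of is_RC_rep) := RC_lines.
have E2 : L2 = lineset (reps_of is_IA_rep) := IA_lines f hK.
have E3 : L3 = lineset (reps_of is_UG2_rep) := UG2_lines.
have E4 : L4 = lineset (reps_of is_RA_rep ++ reps_of is_IC_rep).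
  exact: setU_lineset RA_lines (IC_lines f hK).
have E5 : L5 = lineset ((reps_of is_Tr_rep ++ reps_of is_UG1_rep) ++ reps_of is_UnG_rep).
  exact: setU_lineset (setU_lineset Tr_lines UG1_lines) UnG_lines.
have E6 : L6 = lineset (reps_of is_EG_rep ++ reps_of is_EnG_rep).
  exact: setU_lineset EG_lines (EnG_lines f hK).
split; first by rewrite E1 E2 E3 E4 E5 E6 -set_in_seq6 line_orbits_F2.
- exact: card_line_orbits_F2.
- split; [rewrite E1 | rewrite E2 | rewrite E3 | split; [rewrite E4 | rewrite E5 | rewrite E6]];
    by apply: card_lineset; vm_compute.
- split; [rewrite RA_lines | rewrite (IC_lines f hK) | rewrite Tr_lines | rewrite UG1_lines |
          split; [rewrite UnG_lines | rewrite EG_lines | rewrite (EnG_lines f hK)]];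
    by apply: card_lineset; vm_compute.
Qed.
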